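(* Let $r\ge 6$ and $n\ge 3$, and let $v=(u_1,1)\in V(C_r\times K_n)$. Then the subcomplex $st(v)\cap SC(v)$ of $I(C_r\times K_n)$ is the union of subcomplexes $X_1,\dots,X_{n-1},Y_1,\dots,Y_{n-1}$ such that: (1) for every $i$, $X_i\cong Y_i\cong I(G_{r-4,n})$; (2) if $r\ge7$, for every $i$, $X_i\cap Y_i\cong I(\mathring W_{r-5,n})$; (3) if $r\ge 7$, for every $i\ne j$, $X_i\cap Y_j\cong I(\mathring H_{r-5,n})$; (4) for every $i\ne j$, $X_i\cap X_j$ and $Y_i\cap Y_j$ are contractible; (5) the intersection of any $m\ge 3$ distinct complexes among $X_1,\dots,X_{n-1},Y_1,\dots,Y_{n-1}$ is contractible.
   Context: $C_r$ is the cycle with vertices $u_1,\dots,u_r$ (edges $u_iu_{i+1}$ and $u_ru_1$); $K_n$ is the complete graph on $\{1,\dots,n\}$; $C_r\times K_n$ is the categorical product ($(u_i,a)$ adjacent to $(u_{i'},b)$ iff $u_iu_{i'}$ is an edge of $C_r$ and $a\ne b$). $P_k$ is the path $u_1,\dots,u_k$ and $P_k\times K_n$ is defined analogously. For $k\ge2$: $W_{k,n}$ is obtained from $P_k\times K_n$ by adding vertices $v_1,v_2$ and edges $(u_1,i)v_1$ ($i\ne2$), $(u_k,i)v_2$ ($i\ne2$); $H_{k,n}$ is obtained from $P_k\times K_n$ by adding vertices $v_1,v_2$ and edges $(u_1,i)v_1$ ($i\ge2$), $(u_k,i)v_2$ ($i\ne2$); $G_{k,n}$ is $H_{k,n}$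 plus vertices $w_1,w_2$ and edges $v_1w_1,w_1w_2,w_2v_2$; $\mathring W_{k,n}$ is $W_{k,n}$ plus vertices $w_1,w,w_2$ and edges $w_1w,ww_2,v_1w_1,v_2w_2$; $\mathring H_{k,n}$ is $H_{k,n}$ plus vertices $w_1,w_2$ and edges $v_1w_1,v_2w_2$. $I(G)$ is the independence complex (simplices = non-empty independent vertex sets). In a simplicial complex $K$, $st(\sigma)=\{\tau\in K:\tau\cup\sigma\in K\}$; in $I(G)$, the star cluster of a vertex $v$ is $SC(v)=\bigcup_{u\in N(v)}st(u)$, where $N(v)$ is the set of neighbours of $v$ in $G$. $\cong$ denotes isomorphism of simplicial complexes. *)

From HB Require Import structures.
From mathcomp Require Import all_boot all_order all_algebra.

Set Implicit Arguments.
Unset Strict Implicit.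
Unset Printing Implicit Defensive.

Import Order.TTheory GRing.Theory Num.Theory.

(* a complex is its set of (non-empty) simplices, a {set {set V}}.      *)

Section Complexes.
Variable V : finType.

Definition indep_complex (adj : rel V) : {set {set V}} :=
  [set s : {set V} | (s != set0) &&
     [forall x in s, forall y in s, ~~ adj x y]].

Definition is_subcomplex (X K : {set {set V}}) : Prop :=
  X \subset K /\
  (forall s t : {set V}, s \in X -> t \subset s -> t != set0 -> t \in X).

Definition star (K : {set {set V}}) (sigma : {set V}) : {set {set V}} :=
  [set tau in K | tau :|: sigma \in K].

Definition star_cluster (adj : rel V) (v : V) : {set {set V}} :=
  \bigcup_(u | adj v u) star (indep_complex adj) [set u].

Definition vertices (K : {set {set V}}) : {set V} := \bigcup_(s in K) s.

End Complexes.

Definition cx_iso (V W : finType) (K : {set {set V}}) (L : {set {set W}}) :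
  Prop :=
  exists f : V -> W,
    {in vertices K &, injective f} /\ L = [set f @: s | s : {set V} in K].

(* Graphs.  u_i <-> index i-1 in 'I_r, vertex a of K_n <-> a-1 in 'I_n *)

Definition cyc_adj (r : nat) (i j : 'I_r) : bool :=
  (j == (i.+1 %% r)%N :> nat) || (i == (j.+1 %% r)%N :> nat).

Definition CK_adj (r n : nat) : rel ('I_r * 'I_n) :=
  fun x y => cyc_adj x.1 y.1 && (x.2 != y.2).

Definition path_adj (k : nat) (i j : 'I_k) : bool :=
  (j == i.+1 :> nat) || (i == j.+1 :> nat).

(* P_k x K_n plus m extra vertices; extra vertex 0 is v1, attached to
   (u_1, a) for a in p1; extra vertex 1 is v2, attached to (u_k, a) for
   a in p2; the extra vertices form the graph with edge list es. *)
Definition ext_adj (k n m : nat) (p1 p2 : pred 'I_n) (es : seq (nat * nat))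
  : rel (('I_k * 'I_n) + 'I_m) :=
  let att (a : 'I_k * 'I_n) (e : 'I_m) :=
    [&& (e == 0%N :> nat), (a.1 == 0%N :> nat) & p1 a.2] ||
    [&& (e == 1%N :> nat), (a.1 == k.-1 :> nat) & p2 a.2] in
  fun x y =>
    match x, y with
    | inl a, inl b => path_adj a.1 b.1 && (a.2 != b.2)
    | inl a, inr e => att a e
    | inr e, inl a => att a e
    | inr e, inr f => ((val e, val f) \in es) || ((val f, val e) \in es)
    end.

(* K_n vertex labels: "i != 2" is index != 1; "i >= 2" is index != 0 *)
Definition not2 (n : nat) : pred 'I_n := fun a => a != 1%N :> nat.
Definition ge2 (n : nat) : pred 'I_n := fun a => a != 0%N :> nat.

(* G_{k,n} = H_{k,n} + w1, w2 ; extras: 0=v1, 1=v2, 2=w1, 3=w2 *)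
Definition G_adj (k n : nat) := @ext_adj k n 4 (@ge2 n) (@not2 n)
  [:: (0, 2); (2, 3); (3, 1)]%N.

(* ring-W_{k,n} = W_{k,n} + w1, w, w2 ; extras 0=v1,1=v2,2=w1,3=w,4=w2 *)
Definition Wring_adj (k n : nat) := @ext_adj k n 5 (@not2 n) (@not2 n)
  [:: (2, 3); (3, 4); (0, 2); (1, 4)]%N.

(* ring-H_{k,n} = H_{k,n} + w1, w2 ; extras 0=v1, 1=v2, 2=w1, 3=w2 *)
Definition Hring_adj (k n : nat) := @ext_adj k n 4 (@ge2 n) (@not2 n)
  [:: (0, 2); (1, 3)]%N.

From mathcomp Require Import all_classical all_reals all_analysis.
From mathcomp Require Import Rstruct Rstruct_topology.

Local Open Scope ring_scope.
Local Open Scope classical_set_scope.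

Definition realization (V : finType) (K : {set {set V}}) :
  set {ptws V -> Rdefinitions.R} :=
  [set t | (forall v, 0 <= t v) /\ \sum_(v : V) t v = 1 /\
           finset (fun v => t v != 0) \in K].

Definition contractible (V : finType) (K : {set {set V}}) : Prop :=
  exists x0 : {ptws V -> Rdefinitions.R}, realization K x0 /\
  exists H : (Rdefinitions.R * {ptws V -> Rdefinitions.R})%type -> {ptws V -> Rdefinitions.R},
    {within `[0%R, 1%R] `*` realization K, continuous H} /\
    (forall t x, t \in `[0%R, 1%R] -> realization K x ->
                 realization K (H (t, x))) /\
    (forall x, realization K x -> H (0%R, x) = x /\ H (1%R, x) = x0).

Local Close Scope classical_set_scope.

(* In I(G), st(x) ∩ st(y) is the full subcomplex on the common non-neighbours
   of x and y.  The neighbours of v = (u_1, 1) are the (u_2, a) and (u_r, a)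
   with a <> 1, so st(v) ∩ SC(v) is the union of the full subcomplexes X_a, Y_a
   on the common non-neighbours of v and (u_2, a), resp. (u_r, a), and every
   intersection of them is again a full subcomplex.  Up to a permutation of
   the colours and the reflection of the cycle fixing u_1, the vertex sets of
   X_a, X_a ∩ Y_a and X_a ∩ Y_b induce G, W̊ and H̊: the arc u_4, u_5, ... of the
   cycle carries the P_k × K_n part and the few remaining vertices near u_1
   are v1, v2, w1, (w,) w2.  The common vertices of X_a and X_b (a <> b) avoid
   u_1 and u_3, so (u_2, 1) is isolated in the graph they induce and the complex
   is a cone; likewise (u_r, 1) for Y_a ∩ Y_b.  Among three or more of the X's
   and Y's, two are of the same kind. *)

From mathcomp Require Import all_classical all_reals all_analysis.
From mathcomp Require Import Rstruct.
(* Imported after the analysis libraries, so that finset's set0, setT, ...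
   shadow their classical_sets namesakes. *)
From mathcomp Require Import all_boot all_algebra all_fingroup zify.

Set Implicit Arguments.
Unset Strict Implicit.
Unset Printing Implicit Defensive.

Import GRing.Theory Num.Theory.
Import numFieldNormedType.Exports.

(** * Cones are contractible *)

Local Open Scope classical_set_scope.

Lemma continuous_ptws (T : topologicalType) (I : choiceType) (K : topologicalType)
    (f : T -> {ptws I -> K}) :
  (forall i, continuous (fun z => f z i)) -> continuous f.
Proof.
move=> cf z.
pose Tc i := Topological.class (initial_topology (fun g : {ptws I -> K} => g i)).
apply/(@cvg_sup _ _ Tc _ _ (fmap_filter _ (nbhs_filter z))) => i.
by apply: (@continuous_comp_initial _ _ _ (fun g : {ptws I -> K} => g i)); exact: cf.
Qed.

Section ConeContraction.
Variables (R : realType) (V : finType).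
Local Open Scope ring_scope.

Definition dirac_pt (c : V) : {ptws V -> R} := fun v => (v == c)%:R.

Definition cone_homotopy (c : V) (z : R * {ptws V -> R}) : {ptws V -> R} :=
  fun v => (1 - z.1) * z.2 v + z.1 * dirac_pt c v.

Lemma cone_homotopy_continuous (c : V) :
  continuous (cone_homotopy c : R * {ptws V -> R} -> {ptws V -> R}).
Proof.
apply: continuous_ptws => v z.
have fst_cvg : (fun z : R * {ptws V -> R} => z.1) @ z --> z.1 by exact: cvg_fst.
have coord_cvg : (fun z : R * {ptws V -> R} => z.2 v) @ z --> z.2 v.
  apply: (@cvg_comp _ _ _ snd (fun g : {ptws V -> R} => g v)); first exact: cvg_snd.
  exact: (@proj_continuous _ (fun=> R) v).
have cst_cvg (a : R) := @cvg_cst R a _ (nbhs z) (nbhs_filter z).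
exact: cvgD (cvgM (cvgB (cst_cvg 1) fst_cvg) coord_cvg) (cvgM fst_cvg (cst_cvg _)).
Qed.

Lemma cone_homotopy0 (c : V) x : cone_homotopy c (0, x) = x.
Proof. by apply/funext => v; rewrite /cone_homotopy /= subr0 mul1r mul0r addr0. Qed.

Lemma cone_homotopy1 (c : V) x : cone_homotopy c (1, x) = dirac_pt c.
Proof. by apply/funext => v; rewrite /cone_homotopy /= subrr mul0r add0r mul1r. Qed.

End ConeContraction.

Local Close Scope classical_set_scope.

Section ConeContractible.
Variables (V : finType) (K : {set {set V}}) (c : V).
Hypotheses (Kc : [set c] \in K) (K_cone : forall s, s \in K -> c |: s \in K).

Let R := Rdefinitions.R.
Local Open Scope ring_scope.

Lemma realization_dirac_pt : realization K (dirac_pt R c).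
Proof.
split; first by move=> v; rewrite /dirac_pt ler0n.
split; first by rewrite /dirac_pt (bigD1 c) //= eqxx big1 ?addr0 // => v /negbTE ->.
suff -> : finset (fun v => dirac_pt R c v != 0) = [set c] by [].
by apply/setP => v; rewrite !inE /dirac_pt pnatr_eq0 eqb0 negbK.
Qed.

Lemma realization_cone_homotopy t x :
  0 <= t <= 1 -> realization K x -> realization K (cone_homotopy c (t, x)).
Proof.
move=> /andP[t_ge0 t_le1] [x_ge0 [x_sum1 x_supp]].
have [->|t_neq0] := eqVneq t 0; first by rewrite cone_homotopy0.
have [->|t_neq1] := eqVneq t 1; first by rewrite cone_homotopy1; exact: realization_dirac_pt.
have t1_ge0 : 0 <= 1 - t by rewrite subr_ge0.
have d_ge0 v : 0 <= dirac_pt R c v by exact: ler0n.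
split; first by move=> v; apply: addr_ge0; apply: mulr_ge0.
split.
  rewrite /cone_homotopy /= big_split /= -!mulr_sumr x_sum1.
  by case: realization_dirac_pt => _ [-> _]; rewrite !mulr1 subrK.
suff -> : finset (fun v => cone_homotopy c (t, x) v != 0) = c |: finset (fun v => x v != 0).
  exact: K_cone x_supp.
apply/setP => v; rewrite !inE /cone_homotopy /= paddr_eq0 ?mulr_ge0 //.
rewrite !mulf_eq0 subr_eq0 eq_sym (negbTE t_neq1) (negbTE t_neq0) /= /dirac_pt.
by case: (v == c); rewrite ?oner_eq0 ?eqxx ?andbF ?andbT ?orbT.
Qed.

Lemma cone_contractible : contractible K.
Proof.
exists (dirac_pt R c); split; first exact: realization_dirac_pt.
exists (cone_homotopy c); split.
  exact/continuous_subspaceT/cone_homotopy_continuous.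
split=> [t x /set_mem/= t01 Kx|x _]; last by rewrite cone_homotopy0 cone_homotopy1.
by apply: realization_cone_homotopy => //; rewrite in_itv /= in t01.
Qed.

End ConeContractible.

(** * Full subcomplexes of independence complexes *)

Section IndependenceComplex.
Variables (V : finType) (adj : rel V).

Definition indep_on (S : {set V}) : {set {set V}} :=
  [set s in indep_complex adj | s \subset S].

Definition non_nbhd (x : V) : {set V} := [set y | ~~ adj x y].

Lemma indep_complexP s :
  reflect (s != set0 /\ {in s &, forall x y, ~~ adj x y}) (s \in indep_complex adj).
Proof.
rewrite inE; apply: (iffP andP) => -[s0 s_indep]; split => //.
  by move=> x y xs ys; move/forallP/(_ x)/implyP/(_ xs)/forallP/(_ y)/implyP: s_indep; apply.
by apply/forallP => x; apply/implyP => xs; apply/forallP => y; apply/implyP; apply: s_indep.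
Qed.

Lemma mem_indep_on S s :
  (s \in indep_on S) = (s \in indep_complex adj) && (s \subset S).
Proof. by rewrite inE. Qed.

Lemma indep_on_subcomplex S : is_subcomplex (indep_on S) (indep_complex adj).
Proof.
split=> [|s t]; first by apply/subsetP => s; rewrite mem_indep_on => /andP[].
rewrite !mem_indep_on => /andP[/indep_complexP[_ s_indep] sS] ts t0.
rewrite (subset_trans ts sS) andbT; apply/indep_complexP; split => // x y xt yt.
by apply: s_indep; apply: (subsetP ts).
Qed.

Lemma indep_onI S T : indep_on S :&: indep_on T = indep_on (S :&: T).
Proof. by apply/setP => s; rewrite inE !mem_indep_on subsetI andbACA andbb. Qed.

Lemma bigcap_indep_on (I : finType) (J : {set I}) (F : I -> {set V}) :
  J != set0 -> \bigcap_(j in J) indep_on (F j) = indep_on (\bigcap_(j in J) F j).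
Proof.
case/set0Pn=> j0 j0J; apply/setP => s; rewrite mem_indep_on.
apply/bigcapP/andP => [s_in|[s_indep /bigcapsP sF] j jJ]; last by rewrite mem_indep_on s_indep sF.
split; first by have := s_in j0 j0J; rewrite mem_indep_on => /andP[].
by apply/bigcapsP => j /s_in; rewrite mem_indep_on => /andP[].
Qed.

Hypotheses (adj_sym : symmetric adj) (adj_irr : irreflexive adj).

Lemma star_indep_vertex u : star (indep_complex adj) [set u] = indep_on (non_nbhd u).
Proof.
apply/setP => s; rewrite inE mem_indep_on.
case s_indep: (s \in indep_complex adj) => //=.
case/indep_complexP: s_indep => _ s_indep.
apply/indep_complexP/subsetP => [[_ su_indep] x xs|s_nu].
  by rewrite inE; apply: su_indep; rewrite !inE ?eqxx ?xs ?orbT.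
split; first by apply/set0Pn; exists u; rewrite !inE eqxx orbT.
have u_s x : x \in s -> ~~ adj u x by move/s_nu; rewrite inE.
move=> x y; rewrite !inE => /orP[xs|/eqP->] /orP[ys|/eqP->].
- exact: s_indep.
- by rewrite adj_sym u_s.
- exact: u_s.
- by rewrite adj_irr.
Qed.

Lemma star_cap_star_cluster v :
  star (indep_complex adj) [set v] :&: star_cluster adj v =
  \bigcup_(u | adj v u) indep_on (non_nbhd v :&: non_nbhd u).
Proof.
apply/setP => s; rewrite inE star_indep_vertex.
apply/andP/bigcupP => [[sv /bigcupP[u vu]]|[u vu]].
  by rewrite star_indep_vertex => su; exists u; rewrite // -indep_onI inE sv.
rewrite -indep_onI inE => /andP[sv su]; split=> //.
by apply/bigcupP; exists u; rewrite ?star_indep_vertex.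
Qed.

Lemma indep_on_contractible (S : {set V}) c :
  c \in S -> {subset S <= non_nbhd c} -> contractible (indep_on S).
Proof.
move=> cS S_nc; apply: (cone_contractible (c := c)).
  rewrite mem_indep_on sub1set cS andbT; apply/indep_complexP.
  split=> [|x y]; first by apply/set0Pn; exists c; rewrite inE.
  by rewrite !inE => /eqP-> /eqP->; rewrite adj_irr.
move=> s; rewrite !mem_indep_on subUset sub1set cS => /andP[/indep_complexP[_ s_indep] sS].
rewrite sS !andbT; apply/indep_complexP; split; first by apply/set0Pn; exists c; rewrite !inE eqxx.
have c_s x : x \in s -> ~~ adj c x by move=> /(subsetP sS)/S_nc; rewrite inE.
move=> x y; rewrite !inE => /orP[/eqP->|xs] /orP[/eqP->|ys].
- by rewrite adj_irr.
- exact: c_s.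
- by rewrite adj_sym c_s.
- exact: s_indep.
Qed.

End IndependenceComplex.

Section InducedEmbedding.
Variables (W V : finType) (adjW : rel W) (adj : rel V).

Definition induced_embedding (g : W -> V) (S : {set V}) : Prop :=
  [/\ injective g, [set g w | w : W] = S & {mono g : w w' / adjW w w' >-> adj w w'}].

Lemma induced_embedding_cx_iso g S (w0 : W) :
  induced_embedding g S -> cx_iso (indep_on adj S) (indep_complex adjW).
Proof.
case=> g_inj gW_S g_mono.
pose f x := odflt w0 [pick w | g w == x].
have gK : cancel g f.
  by move=> w; rewrite /f; case: pickP => [w' /eqP/g_inj|/(_ w)] //; rewrite eqxx.
have fK : {in S, cancel f g} by move=> x; rewrite -gW_S => /imsetP[w _ ->]; rewrite gK.
have vertS : {subset vertices (indep_on adj S) <= S}.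
  by move=> x /bigcupP[s]; rewrite mem_indep_on => /andP[_ /subsetP sS] /sS.
exists f; split.
  by move=> x y /vertS xS /vertS yS fxy; rewrite -(fK x xS) -(fK y yS) fxy.
apply/setP => t; apply/indep_complexP/imsetP => [[t0 t_indep]|[s]].
  exists (g @: t); last by rewrite -imset_comp (eq_imset _ gK) imset_id.
  rewrite mem_indep_on; apply/andP; split.
    apply/indep_complexP; split; first by rewrite imset_eq0.
    by move=> _ _ /imsetP[a ta ->] /imsetP[b tb ->]; rewrite g_mono; apply: t_indep.
  by rewrite -gW_S; apply: imsetS; apply/subsetP.
rewrite mem_indep_on => /andP[/indep_complexP[s0 s_indep] /subsetP sS] ->.
split; first by rewrite imset_eq0.
move=> _ _ /imsetP[x xs ->] /imsetP[y ys ->].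
by rewrite -g_mono !fK ?sS //; apply: s_indep.
Qed.

End InducedEmbedding.

Section Automorphism.
Variables (V : finType) (adj : rel V) (phi : V -> V).
Hypotheses (phi_inj : injective phi) (phi_mono : {mono phi : x y / adj x y}).

Lemma imset_non_nbhd x : phi @: non_nbhd adj x = non_nbhd adj (phi x).
Proof.
apply/setP => y; rewrite -[y](f_invF phi_inj) mem_imset //.
by rewrite !inE phi_mono.
Qed.

Lemma induced_embedding_comp (W : finType) (adjW : rel W) g S :
  induced_embedding adjW adj g S -> induced_embedding adjW adj (phi \o g) (phi @: S).
Proof.
case=> g_inj <- g_mono; split; first exact: inj_comp.
  by rewrite -imset_comp.
by move=> w w'; rewrite /= phi_mono.
Qed.

End Automorphism.

Lemma card_sum_set (I J : finType) (S : {set I + J}) :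
  #|S| = #|[set i | inl i \in S]| + #|[set j | inr j \in S]|.
Proof.
have SE : S = inl @: [set i | inl i \in S] :|: inr @: [set j | inr j \in S].
  apply/setP => -[i|j]; rewrite inE.
    rewrite mem_imset ?inE; last exact: inl_inj.
    by case: imsetP => [[] //|]; rewrite orbF.
  rewrite mem_imset ?inE; last exact: inr_inj.
  by case: imsetP => [[] //|].
rewrite {1}SE cardsU !card_imset; [|exact: inr_inj|exact: inl_inj].
suff -> : inl @: [set i | inl i \in S] :&: inr @: [set j | inr j \in S] = set0.
  by rewrite cards0 subn0.
by apply/setP => x; rewrite !inE; apply/negbTE/andP => -[/imsetP[i _ ->] /imsetP[j _ //]].
Qed.

Lemma perm_map2 (T : finType) (p q a b : T) :
  p != q -> a != b -> exists s : {perm T}, s p = a /\ s q = b.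
Proof.
move=> pq ab; have s1b_p : tperm p a b != p.
  by rewrite -(inj_eq (@perm_inj _ (tperm p a))) tpermK tpermL eq_sym.
exists (tperm q (tperm p a b) * tperm p a)%g; rewrite !permM tpermL tpermK.
by rewrite [tperm q _ p]tpermD ?tpermL // eq_sym.
Qed.

Lemma perm_map3 (T : finType) (p q u a b c : T) :
  [&& p != q, p != u & q != u] -> [&& a != b, a != c & b != c] ->
  exists s : {perm T}, [/\ s p = a, s q = b & s u = c].
Proof.
move=> /and3P[pq pu qu] /and3P[ab ac bc].
have [s1 [s1p s1q]] := perm_map2 pq ab.
have s1u_a : s1 u != a by rewrite -s1p (inj_eq perm_inj) eq_sym.
have s1u_b : s1 u != b by rewrite -s1q (inj_eq perm_inj) eq_sym.
exists (s1 * tperm (s1 u) c)%g; rewrite !permM s1p s1q tpermL.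
by rewrite !tpermD // eq_sym.
Qed.

(** * The graph C_r × K_n *)

Section CycleTimesComplete.
Variables r n : nat.
Local Notation vertex := ('I_r.+1 * 'I_n.+1)%type.
Local Notation adj := (@CK_adj r.+1 n.+1).

Lemma cyc_adjE (i j : 'I_r.+1) :
  cyc_adj i j = [|| j == i.+1 :> nat, (i == r :> nat) && (j == 0 :> nat),
                    i == j.+1 :> nat | (j == r :> nat) && (i == 0 :> nat)].
Proof.
have succ_mod (x : 'I_r.+1) : x.+1 %% r.+1 = if x == r :> nat then 0 else x.+1.
  by case: eqP => [->|ne]; rewrite ?modnn // modn_small //; have := ltn_ord x; lia.
rewrite /cyc_adj !succ_mod; have := ltn_ord i; have := ltn_ord j.
by case: ifP; case: ifP; lia.
Qed.

Lemma CK_adj_sym : symmetric adj.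
Proof. by move=> x y; rewrite /CK_adj /cyc_adj [x.2 == _]eq_sym orbC. Qed.

Lemma CK_adj_irr : irreflexive adj.
Proof. by move=> x; rewrite /CK_adj eqxx andbF. Qed.

Definition recolour (s : {perm 'I_n.+1}) (x : vertex) : vertex := (x.1, s x.2).

Lemma recolour_inj s : injective (recolour s).
Proof. by move=> [l c] [l' c'] [-> /perm_inj ->]. Qed.

Lemma recolour_mono s : {mono recolour s : x y / adj x y}.
Proof. by move=> x y; rewrite /CK_adj /= (inj_eq perm_inj). Qed.

Definition mirror_pos (i : 'I_r.+1) : 'I_r.+1 := inord (if i == 0 :> nat then 0 else r.+1 - i).

Lemma mirror_posE i : mirror_pos i = (if i == 0 :> nat then 0 else r.+1 - i) :> nat.
Proof. by rewrite inordK //; have := ltn_ord i; case: ifP; lia. Qed.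

Definition mirror (x : vertex) : vertex := (mirror_pos x.1, x.2).

Lemma mirrorK : involutive mirror.
Proof.
move=> [l c]; congr pair; apply: val_inj; rewrite /= !mirror_posE.
by have := ltn_ord l; case: (l =P 0 :> nat) => [->|] //=; case: ifP; lia.
Qed.

Lemma mirror_mono : {mono mirror : x y / adj x y}.
Proof.
move=> x y; rewrite /CK_adj /=; congr andb; rewrite !cyc_adjE !mirror_posE.
by have := ltn_ord x.1; have := ltn_ord y.1; do 2 case: ifP; lia.
Qed.

(* On the cycle C_(r+1), star_indep_vertex turns indep_on (Xset a b) into
   st((u_1, b)) ∩ st((u_2, a)) and indep_on (Yset a b) into
   st((u_1, b)) ∩ st((u_(r+1), a)). *)
Definition Xset (a b : 'I_n.+1) : {set vertex} :=
  non_nbhd adj (ord0, b) :&: non_nbhd adj (inord 1, a).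

Definition Yset (a b : 'I_n.+1) : {set vertex} :=
  non_nbhd adj (ord0, b) :&: non_nbhd adj (ord_max, a).

Lemma imset_recolour_Xset s a b : recolour s @: Xset a b = Xset (s a) (s b).
Proof.
rewrite imsetI; last by move=> x y _ _; exact: recolour_inj.
by rewrite !(imset_non_nbhd (@recolour_inj s) (@recolour_mono s)).
Qed.

Lemma imset_recolour_Yset s a b : recolour s @: Yset a b = Yset (s a) (s b).
Proof.
rewrite imsetI; last by move=> x y _ _; exact: recolour_inj.
by rewrite !(imset_non_nbhd (@recolour_inj s) (@recolour_mono s)).
Qed.

Lemma imset_mirror_Xset a b : 1 <= r -> mirror @: Xset a b = Yset a b.
Proof.
move=> r_gt0; rewrite imsetI; last by move=> x y _ _; exact: (inv_inj mirrorK).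
rewrite !(imset_non_nbhd (inv_inj mirrorK) mirror_mono).
congr (non_nbhd _ (_, _) :&: non_nbhd _ (_, _)).
  by apply: val_inj; rewrite /= mirror_posE.
by apply: val_inj; rewrite /= mirror_posE inordK /=; lia.
Qed.

(* The vertex sets of the paper's X_i and Y_i: v = (u_1, 1) is (ord0, ord0) and
   its neighbour (u_2, a), resp. (u_(r+1), a), has colour a = lift ord0 i. *)
Definition Zset (j : 'I_n + 'I_n) : {set vertex} :=
  match j with
  | inl i => Xset (lift ord0 i) ord0
  | inr i => Yset (lift ord0 i) ord0
  end.

Lemma CK_adj_v0 (x : vertex) :
  adj (ord0, ord0) x = ((x.1 == 1 :> nat) || (x.1 == r :> nat)) && (x.2 != ord0).
Proof. by rewrite /CK_adj cyc_adjE /= [_ == x.2]eq_sym; congr andb; have := ltn_ord x.1; lia. Qed.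

Lemma star_cap_star_cluster_Zset : 1 <= r ->
  star (indep_complex adj) [set (ord0, ord0)] :&: star_cluster adj (ord0, ord0) =
  \bigcup_(i < n) (indep_on adj (Zset (inl i)) :|: indep_on adj (Zset (inr i))).
Proof.
move=> r_gt0; rewrite star_cap_star_cluster; [|exact: CK_adj_sym|exact: CK_adj_irr].
apply/setP => s; apply/bigcupP/bigcupP => [[[l c]]|[i _]].
  rewrite CK_adj_v0 /= => /andP[l1r c0].
  case: (unliftP ord0 c) c0 => [i ->|->]; rewrite ?eqxx // => _ su.
  exists i => //; rewrite inE; case/orP: l1r => /eqP l_val.
    have el : l = inord 1 by apply: val_inj; rewrite /= inordK.
    by rewrite el in su; rewrite /Zset /Xset su.
  have el : l = ord_max by apply: val_inj.
  by rewrite el in su; rewrite /Zset /Yset su orbT.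
rewrite inE => /orP[]; [exists (inord 1, lift ord0 i)|exists (ord_max, lift ord0 i)] => //;
  by rewrite CK_adj_v0 /= ?inordK ?eqxx ?orbT // eq_sym neq_lift.
Qed.

Section ConePoints.
Hypothesis r_ge3 : 3 <= r.

Let inord1 : nat_of_ord (inord 1 : 'I_r.+1) = 1.
Proof. by rewrite inordK //; lia. Qed.

Lemma mem_Zset_front j : (inord 1, ord0) \in Zset j.
Proof.
by case: j => i; rewrite !inE /CK_adj !cyc_adjE /= ?inord1 -?val_eqE /=; lia.
Qed.

Lemma mem_Zset_back j : (ord_max, ord0) \in Zset j.
Proof.
by case: j => i; rewrite !inE /CK_adj !cyc_adjE /= ?inord1 -?val_eqE /=; lia.
Qed.

Lemma indep_on_front_contractible (T : {set vertex}) i i' :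
  i != i' -> (inord 1, ord0) \in T -> T \subset Zset (inl i) :&: Zset (inl i') ->
  contractible (indep_on adj T).
Proof.
move=> ii' cT /subsetP T_sub.
apply: (indep_on_contractible CK_adj_sym CK_adj_irr cT) => -[l c] /T_sub.
rewrite !inE /CK_adj !cyc_adjE -!val_eqE /= inord1 /bump.
by move: ii'; rewrite -(inj_eq (@lift_inj _ ord0)) -val_eqE /= /bump; have := ltn_ord l; lia.
Qed.

Lemma indep_on_back_contractible (T : {set vertex}) i i' :
  i != i' -> (ord_max, ord0) \in T -> T \subset Zset (inr i) :&: Zset (inr i') ->
  contractible (indep_on adj T).
Proof.
move=> ii' cT /subsetP T_sub.
apply: (indep_on_contractible CK_adj_sym CK_adj_irr cT) => -[l c] /T_sub.
rewrite !inE /CK_adj !cyc_adjE -!val_eqE /= /bump.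
by move: ii'; rewrite -(inj_eq (@lift_inj _ ord0)) -val_eqE /= /bump; have := ltn_ord l; lia.
Qed.

Lemma bigcap_Zset_contractible (S : {set 'I_n + 'I_n}) :
  3 <= #|S| -> contractible (indep_on adj (\bigcap_(j in S) Zset j)).
Proof.
rewrite card_sum_set; set A := [set i | inl i \in S]; set B := [set i | inr i \in S].
move=> AB_ge3; have [A_le1|/card_gt1P[i [i' [iS i'S ii']]]] := leqP #|A| 1; last first.
  apply: (indep_on_front_contractible ii').
    by apply/bigcapP => j _; exact: mem_Zset_front.
  by rewrite !inE in iS i'S; rewrite subsetI !bigcap_inf.
have /card_gt1P[i [i' [iS i'S ii']]] : 1 < #|B| by lia.
apply: (indep_on_back_contractible ii').
  by apply/bigcapP => j _; exact: mem_Zset_back.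
by rewrite !inE in iS i'S; rewrite subsetI !bigcap_inf.
Qed.

End ConePoints.

End CycleTimesComplete.

(** * Embeddings of G, W̊ and H̊ *)

Section ExtendedPath.
Variables (r n k m : nat).
Local Notation vertex := ('I_r.+1 * 'I_n.+1)%type.
Variable t : m.-tuple vertex.
Hypothesis k_le : k + 2 <= r.

Definition path_vertex (x : 'I_k * 'I_n.+1) : vertex := (inord (x.1 + 3), x.2).

Definition ext_embed (w : 'I_k * 'I_n.+1 + 'I_m) : vertex :=
  match w with inl x => path_vertex x | inr e => tnth t e end.

Lemma path_vertex_pos x : (path_vertex x).1 = x.1 + 3 :> nat.
Proof. by rewrite inordK //; have := ltn_ord x.1; lia. Qed.

Lemma ext_embed_inj :
  uniq t -> all (fun y : vertex => (y.1 < 3) || (k + 3 <= y.1)) t -> injective ext_embed.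
Proof.
move=> /tuple_uniqP t_inj /all_tnthP t_out.
have path_inj : injective path_vertex.
  move=> [j c] [j' c'] eq_p; have := congr1 (fun y => nat_of_ord y.1) eq_p.
  by rewrite !path_vertex_pos /= => /addIn/val_inj ej; case: eq_p => _ ->; rewrite ej.
have path_ext x e : path_vertex x != tnth t e.
  apply/negP => /eqP/(congr1 (fun y => nat_of_ord y.1)); rewrite path_vertex_pos.
  by have /= := t_out e; have := ltn_ord x.1; lia.
move=> [x|e] [x'|e'] //= eq_w; first by rewrite (path_inj _ _ eq_w).
- by move: (path_ext x e'); rewrite eq_w eqxx.
- by move: (path_ext x' e); rewrite eq_w eqxx.
- by rewrite (t_inj _ _ eq_w).
Qed.

Lemma ext_embed_image :
  [set ext_embed w | w : 'I_k * 'I_n.+1 + 'I_m] =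
  [set x : vertex | 3 <= x.1 < k + 3] :|: [set x in t].
Proof.
apply/setP => x; apply/imsetP/idP => [[[[j c]|e] _ ->]|].
- by rewrite !inE path_vertex_pos /=; apply/orP; left; have := ltn_ord j; lia.
- by rewrite !inE mem_tnth orbT.
case: x => l c; rewrite !inE /=.
move=> /orP[/andP[l_ge3 l_lt]|/tnthP[e ->]]; last by exists (inr e).
have j_lt : l - 3 < k by lia.
exists (inl (Ordinal j_lt, c)) => //; congr pair; apply: val_inj; rewrite /= inordK //=; lia.
Qed.

Lemma ext_embed_mono p1 p2 es :
  (forall x e, @ext_adj k n.+1 m p1 p2 es (inl x) (inr e) = CK_adj (path_vertex x) (tnth t e)) ->
  (forall e e', @ext_adj k n.+1 m p1 p2 es (inr e) (inr e') = CK_adj (tnth t e) (tnth t e')) ->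
  {mono ext_embed : w w' / @ext_adj k n.+1 m p1 p2 es w w' >-> CK_adj w w'}.
Proof.
move=> path_ext ext_ext [[j c]|e] [[j' c']|e']; rewrite ?path_ext ?ext_ext //.
  rewrite /= /CK_adj /path_adj cyc_adjE !path_vertex_pos /=; congr andb.
  by have := ltn_ord j; have := ltn_ord j'; lia.
by rewrite CK_adj_sym -path_ext.
Qed.

Lemma ext_embed_induced p1 p2 es (S : {set vertex}) :
  uniq t -> all (fun y : vertex => (y.1 < 3) || (k + 3 <= y.1)) t ->
  (forall x : vertex, 3 <= x.1 < k + 3 -> x \in S) -> (forall e, tnth t e \in S) ->
  (forall x : vertex, x \in S -> (x.1 < 3) || (k + 3 <= x.1) -> x \in t) ->
  (forall x e, @ext_adj k n.+1 m p1 p2 es (inl x) (inr e) = CK_adj (path_vertex x) (tnth t e)) ->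
  (forall e e', @ext_adj k n.+1 m p1 p2 es (inr e) (inr e') = CK_adj (tnth t e) (tnth t e')) ->
  induced_embedding (@ext_adj k n.+1 m p1 p2 es) (@CK_adj r.+1 n.+1) ext_embed S.
Proof.
move=> t_uniq t_out mid_S t_S S_out path_ext ext_ext.
split; [exact: ext_embed_inj | | exact: ext_embed_mono].
rewrite ext_embed_image; apply/setP => -[l c]; rewrite !inE /=.
apply/orP/idP => [[/(mid_S (l, c)) //|/tnthP[e ->] //]|lc_S].
by have [l_mid|l_out] := boolP (3 <= l < k + 3); [left|right; apply: S_out => //=; lia].
Qed.

End ExtendedPath.

Section GraphEmbeddings.
Variables r n : nat.
Hypotheses (n_ge2 : 2 <= n) (r_ge5 : 5 <= r).
Local Notation vertex := ('I_r.+1 * 'I_n.+1)%type.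

Let pos1 : nat_of_ord (inord 1 : 'I_r.+1) = 1. Proof. by rewrite inordK //; lia. Qed.
Let pos2 : nat_of_ord (inord 2 : 'I_r.+1) = 2. Proof. by rewrite inordK //; lia. Qed.
Let pos_r1 : nat_of_ord (inord (r - 1) : 'I_r.+1) = r - 1. Proof. by rewrite inordK //; lia. Qed.
Let col1 : nat_of_ord (inord 1 : 'I_n.+1) = 1. Proof. by rewrite inordK //; lia. Qed.
Let col2 : nat_of_ord (inord 2 : 'I_n.+1) = 2. Proof. by rewrite inordK //; lia. Qed.

Local Ltac ck_arith :=
  rewrite ?inE /CK_adj ?cyc_adjE ?xpair_eqE -?val_eqE /= ?pos1 ?pos2 ?pos_r1 ?col1 ?col2.

Local Ltac pick_entry e :=
  match goal with |- exists i : 'I_?m, _ => exists (@Ordinal m e isT) end;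
  apply/eqP; rewrite /tnth /=; ck_arith; lia.

(* The vertices of S off the arc are located one cycle position at a time
   before lia is called, which keeps the lia problems small. *)
Local Ltac solve_ext_embed :=
  apply: ext_embed_induced; [lia
  | by rewrite /=; ck_arith; lia
  | by rewrite /=; ck_arith; lia
  | move=> [l c] /= /andP[l_ge3 l_lt]; ck_arith; lia
  | move=> [[|[|[|[|[|e]]]]] he] //; rewrite /tnth /=; ck_arith; lia
  | intros [[[|[|[|l]]] hl] c] S_lc l_out; simpl in l_out; apply/tnthP;
    revert S_lc; ck_arith => S_lc;
    [ | | | have [l_p|l_p] : l.+3 = r - 1 \/ l.+3 = r by lia];
    first [exfalso; lia | pick_entry 0 | pick_entry 1 | pick_entry 2 | pick_entry 3 | pick_entry 4]
  | move=> [j c] [[|[|[|[|[|e]]]]] he] //=;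
    rewrite /CK_adj cyc_adjE path_vertex_pos /ge2 /not2 /tnth /=; ck_arith; have := ltn_ord j; lia
  | move=> [[|[|[|[|[|e]]]]] he] [[|[|[|[|[|e']]]]] he'] //=;
    rewrite /tnth /=; ck_arith; lia].

(* The images of the extra vertices v1, v2, w1, (w,) w2 of the target graph,
   in the order fixed by G_adj, Wring_adj and Hring_adj. *)
Definition G_vertices : 4.-tuple vertex :=
  [tuple (inord 2, ord0); (ord_max, inord 1); (inord 1, inord 1); (ord0, ord0)].

Definition W_vertices : 5.-tuple vertex :=
  [tuple (inord 2, inord 1); (inord (r - 1), inord 1); (inord 1, ord0);
         (ord0, inord 1); (ord_max, ord0)].

Definition H_vertices : 4.-tuple vertex :=
  [tuple (inord 2, ord0); (inord (r - 1), inord 1); (inord 1, inord 2);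
         (ord_max, inord 2)].

Lemma G_embedding :
  induced_embedding (@G_adj (r.+1 - 4) n.+1) (@CK_adj r.+1 n.+1)
    (@ext_embed r n (r.+1 - 4) 4 G_vertices) (Xset r ord0 (inord 1)).
Proof. by solve_ext_embed. Qed.

Lemma W_embedding : 6 <= r ->
  induced_embedding (@Wring_adj (r.+1 - 5) n.+1) (@CK_adj r.+1 n.+1)
    (@ext_embed r n (r.+1 - 5) 5 W_vertices)
    (Xset r (inord 1) ord0 :&: Yset r (inord 1) ord0).
Proof. by move=> r_ge6; solve_ext_embed. Qed.

Lemma H_embedding : 6 <= r ->
  induced_embedding (@Hring_adj (r.+1 - 5) n.+1) (@CK_adj r.+1 n.+1)
    (@ext_embed r n (r.+1 - 5) 4 H_vertices)
    (Xset r ord0 (inord 2) :&: Yset r (inord 1) (inord 2)).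
Proof. by move=> r_ge6; solve_ext_embed. Qed.

End GraphEmbeddings.

Section Isomorphisms.
Variables r n : nat.
Hypotheses (n_ge2 : 2 <= n) (r_ge5 : 5 <= r).
Local Notation adj := (@CK_adj r.+1 n.+1).

Let c01 : ord0 != inord 1 :> 'I_n.+1.
Proof. by rewrite -val_eqE /= inordK //; lia. Qed.

Let c02 : ord0 != inord 2 :> 'I_n.+1.
Proof. by rewrite -val_eqE /= inordK //; lia. Qed.

Let c12 : inord 1 != inord 2 :> 'I_n.+1.
Proof. by rewrite -val_eqE /= !inordK //; lia. Qed.

Lemma recolour_embedding (s : {perm 'I_n.+1}) (W : finType) (adjW : rel W) g S :
  induced_embedding adjW adj g S ->
  induced_embedding adjW adj (recolour s \o g) (recolour s @: S).
Proof. exact/induced_embedding_comp/recolour_mono/recolour_inj. Qed.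

Lemma imset_recolour_XYset (s : {perm 'I_n.+1}) (a a' b : 'I_n.+1) :
  recolour s @: (Xset r a b :&: Yset r a' b) = Xset r (s a) (s b) :&: Yset r (s a') (s b).
Proof.
rewrite imsetI ?imset_recolour_Xset ?imset_recolour_Yset //.
by move=> x y _ _; exact: recolour_inj.
Qed.

Lemma Xset_embedding_G a b : a != b ->
  exists g, induced_embedding (@G_adj (r.+1 - 4) n.+1) adj g (Xset r a b).
Proof.
move=> ab; have [s [<- <-]] := perm_map2 c01 ab.
rewrite -imset_recolour_Xset.
have := recolour_embedding s (G_embedding n_ge2 r_ge5).
by eexists; eassumption.
Qed.

Lemma Xset_iso_G a b : a != b ->
  cx_iso (indep_on adj (Xset r a b)) (indep_complex (@G_adj (r.+1 - 4) n.+1)).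
Proof.
by move=> /Xset_embedding_G[g /(induced_embedding_cx_iso (inr ord0))].
Qed.

Lemma Yset_iso_G a b : a != b ->
  cx_iso (indep_on adj (Yset r a b)) (indep_complex (@G_adj (r.+1 - 4) n.+1)).
Proof.
move=> /Xset_embedding_G[g g_emb].
rewrite -imset_mirror_Xset; last lia.
exact: induced_embedding_cx_iso (inr ord0)
  (induced_embedding_comp (inv_inj (@mirrorK r n)) (@mirror_mono r n) g_emb).
Qed.

Lemma XYset_iso_Wring a b : 6 <= r -> a != b ->
  cx_iso (indep_on adj (Xset r a b :&: Yset r a b))
         (indep_complex (@Wring_adj (r.+1 - 5) n.+1)).
Proof.
move=> r_ge6 ab; have c10 : inord 1 != ord0 :> 'I_n.+1 by rewrite eq_sym.
have [s [<- <-]] := perm_map2 c10 ab; rewrite -imset_recolour_XYset.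
exact: induced_embedding_cx_iso (inr ord0)
  (recolour_embedding s (W_embedding n_ge2 r_ge5 r_ge6)).
Qed.

Lemma XYset_iso_Hring a a' b : 6 <= r -> [&& a != a', a != b & a' != b] ->
  cx_iso (indep_on adj (Xset r a b :&: Yset r a' b))
         (indep_complex (@Hring_adj (r.+1 - 5) n.+1)).
Proof.
move=> r_ge6 /(perm_map3 (p := ord0) (q := inord 1) (u := inord 2)).
rewrite c01 c02 c12 => /(_ isT) [s [<- <- <-]]; rewrite -imset_recolour_XYset.
exact: induced_embedding_cx_iso (inr ord0)
  (recolour_embedding s (H_embedding n_ge2 r_ge5 r_ge6)).
Qed.

End Isomorphisms.

Theorem mainTheorem17 (r n : nat) (v : 'I_r * 'I_n) :
  (6 <= r)%N -> (3 <= n)%N -> val v.1 = 0%N -> val v.2 = 0%N ->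
  exists X Y : 'I_n.-1 -> {set {set 'I_r * 'I_n}},
    let K := indep_complex (@CK_adj r n) in
    let Z := fun j : 'I_n.-1 + 'I_n.-1 =>
               match j with inl i => X i | inr i => Y i end in
    (forall i, is_subcomplex (X i) K /\ is_subcomplex (Y i) K) /\
    star K [set v] :&: star_cluster (@CK_adj r n) v
      = \bigcup_(i : 'I_n.-1) (X i :|: Y i) /\
    (forall i, cx_iso (X i) (indep_complex (@G_adj (r - 4) n)) /\
               cx_iso (Y i) (indep_complex (@G_adj (r - 4) n))) /\
    ((7 <= r)%N -> forall i,
       cx_iso (X i :&: Y i) (indep_complex (@Wring_adj (r - 5) n))) /\
    ((7 <= r)%N -> forall i j, i != j ->
       cx_iso (X i :&: Y j) (indep_complex (@Hring_adj (r - 5) n))) /\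
    (forall i j, i != j ->
       contractible (X i :&: X j) /\ contractible (Y i :&: Y j)) /\
    (forall S : {set 'I_n.-1 + 'I_n.-1}, (3 <= #|S|)%N ->
       contractible (\bigcap_(j in S) Z j)).
Proof.
case: r v => [|r] // v r_ge5; case: n v => [|n] // v n_ge2.
case: v => l c /= /eqP l0 /eqP c0.
have -> : l = ord0 by apply/eqP.
have -> : c = ord0 by apply/eqP.
have r_ge3 : 3 <= r by lia.
have lift_neq0 (i : 'I_n) : lift ord0 i != ord0 by rewrite eq_sym neq_lift.
exists (fun i => indep_on (@CK_adj r.+1 n.+1) (Zset r (inl i))),
       (fun i => indep_on (@CK_adj r.+1 n.+1) (Zset r (inr i))); cbv beta zeta.
split; first by move=> i; split; apply: indep_on_subcomplex.
split; first by apply: star_cap_star_cluster_Zset; lia.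
split; first by move=> i; split; [apply: Xset_iso_G|apply: Yset_iso_G].
split; first by move=> r_ge6 i; rewrite indep_onI; apply: XYset_iso_Wring.
split.
  move=> r_ge6 i j ij; rewrite indep_onI; apply: XYset_iso_Hring => //.
  by rewrite !lift_neq0 (inj_eq lift_inj) ij.
split.
  move=> i j ij; rewrite !indep_onI; split.
    by apply: (indep_on_front_contractible r_ge3 ij); rewrite // inE !(mem_Zset_front r_ge3).
  by apply: (indep_on_back_contractible r_ge3 ij); rewrite // inE !(mem_Zset_back r_ge3).
move=> S S_ge3; rewrite (eq_bigr (fun j => indep_on (@CK_adj r.+1 n.+1) (Zset r j))); last by case.
rewrite bigcap_indep_on; first exact: bigcap_Zset_contractible.
by rewrite -card_gt0 (leq_trans _ S_ge3).
Qed.
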